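(* Let $d\in\mathbb{N}$ and let $\mathcal{S}$ be a dictionary of words in $\Sigma^L$. If there exists an origin word for $\mathcal{S}$ that is not good, then there is no $c\in\Sigma^L$ with $\mathrm{dist}(c,s)\le d$ for all $s\in\mathcal{S}$.
   Context: $\mathrm{dist}$ denotes Hamming distance. An origin word for $\mathcal{S}$ is a word $o\in\Sigma^L$ such that for every position $i\in\{1,\ldots,L\}$, $|\{s\in\mathcal{S}: s[i]=o[i]\}|\ge |\mathcal{S}|/(2|\Sigma|)$. An origin word $o$ is good if $\mathrm{dist}(o,s)\le 4|\Sigma|d$ for every $s\in\mathcal{S}$. *)

From mathcomp Require Import all_boot.
Set Implicit Arguments. Unset Strict Implicit. Unset Printing Implicit Defensive.

Definition word (Sigma : finType) (L : nat) := (L.-tuple Sigma).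

Definition dist (Sigma : finType) (L : nat) (u v : word Sigma L) : nat :=
  #|[set i : 'I_L | tnth u i != tnth v i]|.

(* o is an origin word for S: for every position i,
   |{s in S : s[i] = o[i]}| >= |S| / (2|Sigma|), stated without division as
   2|Sigma| * |{s in S : s[i] = o[i]}| >= |S|. *)
Definition origin_word (Sigma : finType) (L : nat)
    (S : {set word Sigma L}) (o : word Sigma L) : Prop :=
  forall i : 'I_L,
    #|S| <= 2 * #|Sigma| * #|[set s in S | tnth s i == tnth o i]|.

Definition good (Sigma : finType) (L : nat) (d : nat)
    (S : {set word Sigma L}) (o : word Sigma L) : Prop :=
  origin_word S o /\ forall s, s \in S -> dist o s <= 4 * #|Sigma| * d.

From mathcomp Require Import all_boot.

(* Suppose every word of S is within distance d of c. At each position where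
   an origin word o differs from c, at least |S|/(2|Sigma|) words of S agree
   with o and hence differ from c. Counting these mismatches position by
   position gives |S| dist(o,c) <= 2|Sigma| sum_s dist(c,s) <= 2|Sigma| |S| d,
   so dist(o,c) <= 2|Sigma| d, and the triangle inequality through c yields
   dist(o,s) <= (2|Sigma| + 1) d <= 4|Sigma| d: every origin word is good. *)

Section Hamming.
Context {Sigma : finType} {L : nat}.
Implicit Types (u v w c o : word Sigma L) (S : {set word Sigma L}).

Lemma dist_triangle u v w : dist u w <= dist u v + dist v w.
Proof.
rewrite /dist; apply: leq_trans (leq_card_setU _ _).
apply/subset_leq_card/subsetP => i; rewrite !inE.
by case: (tnth u i =P tnth v i) => [-> -> | //]; rewrite orbT.
Qed.

Lemma dist_card0 u v : #|Sigma| = 0 -> dist u v = 0.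
Proof.
move=> Sigma0; apply/eqP; rewrite cards_eq0; apply/eqP/setP => i.
by have := card0_eq Sigma0 (tnth u i); rewrite !inE.
Qed.

Lemma sum_dist c S :
  \sum_(s in S) dist c s = \sum_i #|[set s in S | tnth c i != tnth s i]|.
Proof.
rewrite /dist; under eq_bigr do rewrite -sum1dep_card big_mkcond /=.
rewrite exchange_big /=; apply: eq_bigr => i _.
rewrite -sum1_card [RHS]big_mkcond [LHS]big_mkcond; apply: eq_bigr => s _.
by rewrite !inE; case: (s \in S).
Qed.

Lemma origin_word_mismatch S o c i :
  origin_word S o -> tnth o i != tnth c i ->
  #|S| <= 2 * #|Sigma| * #|[set s in S | tnth c i != tnth s i]|.
Proof.
move=> /(_ i) So oc; apply: leq_trans So _; rewrite leq_mul2l; apply/orP; right.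
apply/subset_leq_card/subsetP => s; rewrite !inE => /andP [-> /eqP ->].
by rewrite eq_sym.
Qed.

Lemma origin_word_dist_le_sum S o c :
  origin_word S o -> #|S| * dist o c <= 2 * #|Sigma| * \sum_(s in S) dist c s.
Proof.
move=> So; rewrite sum_dist big_distrr /= {1}/dist mulnC -sum_nat_const.
rewrite [leqRHS](bigID [in [set i | tnth o i != tnth c i]]) /=.
apply: leq_trans (leq_addr _ _); apply: leq_sum => i; rewrite inE.
exact: origin_word_mismatch.
Qed.

Lemma origin_word_dist_le S o c d :
  origin_word S o -> S != set0 -> (forall s, s \in S -> dist c s <= d) ->
  dist o c <= 2 * #|Sigma| * d.
Proof.
move=> So S_gt0 cS; have := origin_word_dist_le_sum _ _ c So.
have sum_le : \sum_(s in S) dist c s <= #|S| * d.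
  by rewrite -sum_nat_const; apply: leq_sum.
move/leq_trans/(_ (leq_mul (leqnn _) sum_le)).
by rewrite mulnCA leq_pmul2l // card_gt0.
Qed.

End Hamming.

Theorem lemma9 (Sigma : finType) (L d : nat) (S : {set word Sigma L}) :
  (exists o : word Sigma L, origin_word S o /\ ~ good d S o) ->
  ~ (exists c : word Sigma L, forall s, s \in S -> dist c s <= d).
Proof.
move=> [o [So not_good]] [c cS]; apply: not_good; split=> // s sS.
have [Sigma0 | Sigma_gt0] := posnP #|Sigma|; first by rewrite dist_card0.
have oc : dist o c <= 2 * #|Sigma| * d.
  by apply: origin_word_dist_le So _ cS; apply/set0Pn; exists s.
have d_le : d <= 2 * #|Sigma| * d by rewrite leq_pmull // muln_gt0.
have -> : 4 * #|Sigma| * d = 2 * #|Sigma| * d + 2 * #|Sigma| * d.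
  by rewrite -!mulnDl.
apply: leq_trans (dist_triangle o c s) _.
exact: leq_add oc (leq_trans (cS s sS) d_le).
Qed.
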